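(* Let $d\ge4$ be even, $\mathcal{C}\in(\mathbb{R}^2)^{\otimes d}$ the symmetric tensor of $x^d-3y^d$, and $\mathcal{M}=\{x^{d-2}y,x^{d-3}y^2,\dots,xy^{d-2}\}\subset(\mathbb{R}^2)^{\otimes(d-1)}$. Let $E=\{1,\dots,n\}$, $\mathcal{E}=\{n+1,\dots,2n\}$ and let $\mathcal{W}\subset(\mathbb{R}^{E\cup\mathcal{E}})^{\otimes(d-1)}$ be a finite set of tensors such that: (3) $\operatorname{Span}\mathcal{W}$ contains the $n$ clone of every tensor in $\mathcal{M}$; (4e) $\mathbb{I}(E,d)$ is the only decomposable tensor in $\mathbb{I}(E,d)\bmod\mathcal{W}_E$; (4$\epsilon$) $\mathbb{I}(\mathcal{E},d)$ is the only decomposable tensor in $\mathbb{I}(\mathcal{E},d)\bmod\mathcal{W}_{\mathcal{E}}$. Then $\operatorname{minrk}(\mathcal{C}_c\bmod\mathcal{W})<\operatorname{minsrk}(\mathcal{C}_c\bmod\mathcal{W})$, where $\mathcal{C}_c$ is the $n$ clone of $\mathcal{C}$.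
   Context: All tensors are real. Symmetric tensors correspond to forms via $\mathcal{T}\leftrightarrow\sum_k\mathcal{T}(k_1|\dots|k_m)x_{k_1}\cdots x_{k_m}$ (with $x_1=x,x_2=y$ for binary forms). Clone: for $\mathcal{U}\in(\mathbb{R}^2)^{\otimes m}$, its $n$ clone $\mathcal{U}_c\in(\mathbb{R}^{E\cup\mathcal{E}})^{\otimes m}$ has entries $\mathcal{U}_c(k_1|\dots|k_m)=\mathcal{U}(h_1|\dots|h_m)$, where $h_i=1$ if $k_i\in E$ and $h_i=2$ if $k_i\in\mathcal{E}$. For a tensor (or set of tensors) on index set $E\cup\mathcal{E}$, the subscript $E$ (resp. $\mathcal{E}$) denotes restriction of each index to $E$ (resp. $\mathcal{E}$). $\mathbb{I}(E,d)\in(\mathbb{R}^E)^{\otimes d}$ is the all-ones tensor, similarly $\mathbb{I}(\mathcal{E},d)$. For $\mathcal{C}\in(\mathbb{R}^I)^{\otimes d}$ and finite $\mathcal{W}\subset(\mathbb{R}^I)^{\otimes(d-1)}$, $\mathcal{C}\bmod\mathcal{W}$ is the set of tensors with entries $\mathcal{C}(k_1|\dots|k_d)+\sum_{j=1}^dM_j^{(k_j)}(k_1|\dots|\widehat{k_j}|\dots|k_d)$ with arbitrary $M_j^{(k_j)}\in\operatorname{Span}\mathcal{W}$ chosen independently for each $j$ and each $k_j\in I$. $\operatorname{minrk}\mathcal{A}$ is the minimal rank (number of decomposable summands $v_1\otimes\cdots\otimes v_d$) of a tensor in $\mathcal{A}$; $\operatorname{minsrk}\mathcal{A}$ is the minimal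 symmetric rank (number of summands $\lambda v^{\otimes d}$) of a symmetric tensor in $\mathcal{A}$. *)

From HB Require Import structures.
From mathcomp Require Import all_boot all_order all_algebra all_fingroup.
From mathcomp Require Import zify.
From mathcomp Require Import reals.
Set Implicit Arguments. Unset Strict Implicit. Unset Printing Implicit Defensive.
Import Order.TTheory GRing.Theory Num.Theory.
Local Open Scope ring_scope.

Section Tensors.
Variable R : realType.

(* A tensor of order m on the index set 'I_k (i.e. an element of
   (R^k)^{\otimes m}): a function of the multi-index (k_1|...|k_m). *)
Definition tensor (k m : nat) := {ffun 'I_m -> 'I_k} -> R.

Definition ones (k m : nat) : tensor k m := fun _ => 1.

Definition decomposable k m (T : tensor k m) : Prop :=
  exists v : 'I_m -> 'I_k -> R, T = fun t => \prod_(i < m) v i (t i).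

Definition rank_le k m (T : tensor k m) (r : nat) : Prop :=
  exists v : 'I_r -> 'I_m -> 'I_k -> R,
    T = fun t => \sum_(j < r) \prod_(i < m) v j i (t i).

Definition symmetric k m (T : tensor k m) : Prop :=
  forall (s : 'S_m) (t : {ffun 'I_m -> 'I_k}), T [ffun i => t (s i)] = T t.

Definition srank_le k m (T : tensor k m) (r : nat) : Prop :=
  exists (lam : 'I_r -> R) (v : 'I_r -> 'I_k -> R),
    T = fun t => \sum_(j < r) lam j * \prod_(i < m) v j (t i).

Definition is_minrk k m (A : tensor k m -> Prop) (r : nat) : Prop :=
  (exists T, A T /\ rank_le T r) /\
  (forall T s, A T -> rank_le T s -> (r <= s)%N).

Definition is_minsrk k m (A : tensor k m -> Prop) (r : nat) : Prop :=
  (exists T, A T /\ symmetric T /\ srank_le T r) /\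
  (forall T s, A T -> symmetric T -> srank_le T s -> (r <= s)%N).

Definition in_span k m (W : seq (tensor k m)) (T : tensor k m) : Prop :=
  exists c : 'I_(size W) -> R,
    T = fun t => \sum_(i < size W) c i * nth (fun _ => 0) W i t.

Lemma skip_proof d (j : 'I_d) (i : 'I_d.-1) : (bump j i < d)%N.
Proof. move: (ltn_ord i) (ltn_ord j); rewrite /bump; case: (j <= i)%N => /=; lia. Qed.

Definition skip d (j : 'I_d) (i : 'I_d.-1) : 'I_d := Ordinal (skip_proof j i).

Definition drop_idx k d (t : {ffun 'I_d -> 'I_k}) (j : 'I_d) : {ffun 'I_d.-1 -> 'I_k} :=
  [ffun i => t (skip j i)].

Definition in_mod k d (C : tensor k d) (W : seq (tensor k d.-1)) (T : tensor k d) : Prop :=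
  exists M : 'I_d -> 'I_k -> tensor k d.-1,
    (forall j a, in_span W (M j a)) /\
    T = fun t => C t + \sum_(j < d) M j (t j) (drop_idx t j).

(* Symmetric tensor of the binary form sum_j c j x^(m-j) y^j
   (index ord0 <-> x, index ord_max = 1 <-> y). *)
Definition binform (m : nat) (c : nat -> R) : tensor 2 m :=
  fun t => let j := #|[pred i | t i == ord_max]| in c j / ('C(m, j))%:R.

(* E = first n indices, script-E = last n indices of 'I_(n+n). *)
Definition blk n (i : 'I_(n + n)) : 'I_2 := if (i < n)%N then ord0 else ord_max.

Definition clone n m (U : tensor 2 m) : tensor (n + n) m :=
  fun t => U [ffun i => blk (t i)].

Definition restrE n m (T : tensor (n + n) m) : tensor n m :=
  fun t => T [ffun i => lshift n (t i)].
Definition restrEE n m (T : tensor (n + n) m) : tensor n m :=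
  fun t => T [ffun i => rshift n (t i)].

End Tensors.

Arguments clone {R} n {m} U _.
Arguments binform {R} m c _.
Arguments ones {R} k m _.
Arguments restrE {R n m} T _.
Arguments restrEE {R n m} T _.

From Pilot Require Import Defs.
From HB Require Import structures.
From mathcomp Require Import all_boot all_order all_algebra all_fingroup.
From mathcomp Require Import reals zify ring lra.
From Stdlib Require Import FunctionalExtensionality.
Import Order.TTheory GRing.Theory Num.Theory.
Local Open Scope ring_scope.
Set Implicit Arguments. Unset Strict Implicit. Unset Printing Implicit Defensive.

(* Write [ydeg t] for the number of indices of [t] lying in ℰ.  A clone of a
   binary form sees [t] only through [ydeg t], and (3) puts into Span W every
   function of [ydeg] vanishing at 0 and d-1.

   Restricting to E, resp. ℰ, maps C_c mod W into I(E,d) mod W_E, resp.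
   -3 I(ℰ,d) mod W_ℰ.  So if some λ v^⊗d lay in C_c mod W, then by (4e) and (4ε)
   we would have λ v(e)^d = 1 and λ v(ε)^d = -3 for e ∈ E, ε ∈ ℰ, impossible for
   d even.  Hence minsrk ≥ 2, attained by C_c = 1_E^⊗d - 3·1_ℰ^⊗d itself.

   On the other hand (1_E - 3·1_ℰ) ⊗ 1 ⊗ ... ⊗ 1 lies in C_c mod W: its difference
   with C_c is a function of the first index and of the [ydeg] of the others,
   which a correction in the first slot absorbs except at two boundary values;
   these are produced by one more correction spread symmetrically over all
   d slots. *)

Section CloneTensors.
Variable R : realType.

Section Span.
Variables (k m : nat) (W : seq (tensor R k m)).

Lemma in_span0 : in_span W (fun _ => 0).
Proof.
exists (fun _ => 0); apply: functional_extensionality => t.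
by rewrite big1 // => i _; rewrite mul0r.
Qed.

Lemma in_span_lincomb N (a : 'I_N -> R) (F : 'I_N -> tensor R k m) :
  (forall i, in_span W (F i)) -> in_span W (fun t => \sum_(i < N) a i * F i t).
Proof.
move=> spanF; have [c Fc] := fin_all_exists spanF.
exists (fun l => \sum_(i < N) a i * c i l).
apply: functional_extensionality => t.
under eq_bigr => i _ do rewrite (Fc i) big_distrr /=.
rewrite exchange_big /=; apply: eq_bigr => l _.
by rewrite big_distrl /=; apply: eq_bigr => i _; rewrite mulrA.
Qed.

End Span.

Lemma in_mod_self k d (C : tensor R k d) W : in_mod C W C.
Proof.
exists (fun _ _ _ => 0); split=> [j a | ]; first exact: in_span0.
by apply: functional_extensionality => t; rewrite big1 ?addr0.
Qed.

Lemma in_mod_scale k d (C T : tensor R k d) W (c : R) :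
  in_mod C W T -> in_mod (fun t => c * C t) W (fun t => c * T t).
Proof.
case=> M [spanM ->]; exists (fun j a s => c * M j a s); split.
  move=> j a; have [e ->] := spanM j a.
  exists (fun i => c * e i); apply: functional_extensionality => s.
  by rewrite big_distrr; apply: eq_bigr => i _ /=; rewrite mulrA.
by apply: functional_extensionality => t; rewrite mulrDr big_distrr.
Qed.

Definition restr k l m (f : 'I_k -> 'I_l) (T : tensor R l m) : tensor R k m :=
  fun t => T [ffun i => f (t i)].

Lemma in_mod_restr k l d (f : 'I_k -> 'I_l) (C T : tensor R l d) W :
  in_mod C W T -> in_mod (restr f C) (map (restr f) W) (restr f T).
Proof.
case=> M [spanM ->]; exists (fun j a => restr f (M j (f a))); split.
  move=> j a; have [c Mc] := spanM j (f a).
  rewrite /in_span size_map; exists c; apply: functional_extensionality => t.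
  by rewrite Mc /restr; apply: eq_bigr => i _; rewrite (nth_map (fun _ => 0)).
apply: functional_extensionality => t; rewrite /restr; congr (_ + _).
apply: eq_bigr => j _; rewrite ffunE; congr (M j _ _).
by apply/ffunP => i; rewrite !ffunE.
Qed.

Lemma restr_scaled_power k l m (f : 'I_k -> 'I_l) (c : R) (v : 'I_l -> R) :
  restr f (fun t : {ffun 'I_m -> 'I_l} => c * \prod_(i < m) v (t i)) =
  fun t => c * \prod_(i < m) v (f (t i)).
Proof.
apply: functional_extensionality => t; congr (_ * _).
by apply: eq_bigr => i _; rewrite ffunE.
Qed.

(* [symmetric] alone would be ssrbool's symmetry of relations. *)
Lemma srank_le_symmetric k m (T : tensor R k m) r : srank_le T r -> Defs.symmetric T.
Proof.
move=> [lam [v ->]] s t; apply: eq_bigr => j _; congr (_ * _).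
rewrite [RHS](reindex_inj (@perm_inj _ s)) /=.
by apply: eq_bigr => i _; rewrite ffunE.
Qed.

Lemma scaled_power_decomposable k m (c : R) (v : 'I_k -> R) :
  decomposable (fun t : {ffun 'I_m.+1 -> 'I_k} => c * \prod_(i < m.+1) v (t i)).
Proof.
exists (fun i a => if i == ord0 then c * v a else v a).
by apply: functional_extensionality => t /=; rewrite !big_ord_recl eqxx mulrA.
Qed.

Lemma scaled_power_in_mod_const k m (V : seq (tensor R k m.+1.-1)) (c lam : R)
    (v : 'I_k -> R) :
  (forall T, in_mod (ones k m.+1) V T -> decomposable T -> T = ones k m.+1) ->
  c != 0 -> in_mod (fun _ => c) V (fun t => lam * \prod_(i < m.+1) v (t i)) ->
  forall a, lam * v a ^+ m.+1 = c.
Proof.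
move=> onesP c0 /(in_mod_scale c^-1) + a; rewrite mulVf //.
have -> : (fun t : {ffun 'I_m.+1 -> 'I_k} => c^-1 * (lam * \prod_(i < m.+1) v (t i))) =
          (fun t => c^-1 * lam * \prod_(i < m.+1) v (t i)).
  by apply: functional_extensionality => t; rewrite mulrA.
move/onesP/(_ (scaled_power_decomposable _ _ _)) => /(congr1 (fun T => T [ffun _ => a])).
rewrite /ones /=; under eq_bigr do rewrite ffunE; rewrite prodr_const card_ord.
by rewrite -mulrA => /(congr1 ( *%R c)); rewrite /= mulVKf // mulr1.
Qed.

Lemma prod_indicator m (P : pred 'I_m) :
  \prod_(i < m) (P i)%:R = [forall i, P i]%:R :> R.
Proof.
case: (boolP [forall i, P i]) => [/forallP allP | /forallPn [i /negbTE Pi]].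
  by rewrite big1 // => i _; rewrite allP.
by rewrite (bigD1 i) //= Pi mul0r.
Qed.

Lemma sum_indicator m (P : pred 'I_m) (A B : R) :
  \sum_(i < m) (if P i then B else A) = A *+ (m - #|P|) + B *+ #|P|.
Proof.
rewrite (bigID P) /= addrC; congr (_ + _).
  rewrite (eq_bigr (fun=> A)) => [|i /negbTE -> //].
  rewrite sumr_const; congr (_ *+ _).
  apply/eqP; rewrite -(eqn_add2l #|P|) subnKC; last by rewrite -[leqRHS]card_ord max_card.
  by rewrite cardC card_ord.
by rewrite (eq_bigr (fun=> B)) => [|i -> //]; rewrite sumr_const.
Qed.

Definition sum_powers_form d (a b : R) : tensor R 2 d :=
  binform d (fun i => if i == 0%N then a else if i == d then b else 0).
Arguments sum_powers_form : clear implicits.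

Section YDegree.
Variable n : nat.

Definition ydeg m (t : {ffun 'I_m -> 'I_(n + n)}) : nat := (\sum_(i < m) (n <= t i))%N.

Lemma ydegE m (t : {ffun 'I_m -> 'I_(n + n)}) : ydeg t = #|[pred i | (n <= t i)%N]|.
Proof.
rewrite -sum1_card [RHS]big_mkcond; apply: eq_bigr => i _.
by rewrite inE; case: (n <= t i)%N.
Qed.

Lemma ydeg_le m (t : {ffun 'I_m -> 'I_(n + n)}) : (ydeg t <= m)%N.
Proof. by rewrite ydegE -[leqRHS]card_ord max_card. Qed.

Lemma ydeg_eq0 m (t : {ffun 'I_m -> 'I_(n + n)}) : (ydeg t == 0)%N = [forall i, (t i < n)%N].
Proof. by rewrite sum_nat_eq0; apply: eq_forallb => i; rewrite eqb0 -ltnNge. Qed.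

Lemma ydeg_drop d (t : {ffun 'I_d -> 'I_(n + n)}) j :
  (ydeg (drop_idx t j) + (n <= t j) = ydeg t)%N.
Proof.
rewrite /ydeg (bigD1_ord j) //= addnC; congr (_ + _)%N.
by apply: eq_bigr => i _; rewrite /drop_idx ffunE; congr (n <= t _)%N; apply: val_inj.
Qed.

Lemma ydeg_eq_max m (t : {ffun 'I_m -> 'I_(n + n)}) :
  (ydeg t == m) = [forall i, (n <= t i)%N].
Proof.
case: (boolP [forall i, _]) => [/forallP allP | /forallPn [i /negbTE ti_lt]].
  rewrite /ydeg (eq_bigr (fun=> 1%N)); last by move=> i _; rewrite allP.
  by rewrite sum_nat_const card_ord muln1 eqxx.
apply: negbTE; rewrite neq_ltn; apply/orP; left.
rewrite -(ydeg_drop t i) ti_lt addn0.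
by apply: leq_ltn_trans (ydeg_le _) _; rewrite prednK // (leq_ltn_trans _ (ltn_ord i)).
Qed.

Lemma clone_binform m (c : nat -> R) (t : {ffun 'I_m -> 'I_(n + n)}) :
  clone n (binform m c) t = c (ydeg t) / ('C(m, ydeg t))%:R.
Proof.
rewrite /clone /binform ydegE.
suff -> : #|[pred i | [ffun i => blk (t i)] i == ord_max]| = #|[pred i | (n <= t i)%N]| by [].
by apply: eq_card => i; rewrite !inE ffunE /blk; case: ltnP.
Qed.

Lemma in_span_ydeg e (W : seq (tensor R (n + n) e)) (phi : nat -> R) :
  (forall j, (1 <= j <= e - 1)%N ->
     in_span W (clone n (binform e (fun i => (i == j)%:R)))) ->
  phi 0%N = 0 -> phi e = 0 -> in_span W (fun s => phi (ydeg s)).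
Proof.
move=> spanB phi0 phie.
pose F (j : 'I_e.+1) : tensor R (n + n) e :=
  if (0 < j < e)%N then clone n (binform e (fun i => (i == j)%:R)) else fun=> 0.
(* The clone of x^(e-j) y^j is the indicator of [ydeg = j] divided by 'C(e, j). *)
have -> : (fun s => phi (ydeg s)) =
          (fun s => \sum_(j < e.+1) (phi j * ('C(e, j))%:R) * F j s).
  apply: functional_extensionality => s.
  have Ks : (ydeg s < e.+1)%N by rewrite ltnS ydeg_le.
  rewrite (bigD1 (Ordinal Ks)) //= big1 ?addr0 => [|j /eqP Kj]; last first.
    rewrite /F; case: ifP => _; last by rewrite mulr0.
    rewrite clone_binform; case: eqP => [K_j | _]; last by rewrite mul0r mulr0.
    by case: Kj; apply: val_inj.
  rewrite /F /=; case: ifP => [_ | K_bnd].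
    by rewrite clone_binform eqxx mul1r -mulrA mulfV ?mulr1 // pnatr_eq0 -lt0n bin_gt0 ydeg_le.
  move: K_bnd (ydeg_le s); rewrite mulr0; case: (ydeg s) => [|K] // K_bnd K_le.
  by have -> : K.+1 = e by lia.
apply: in_span_lincomb => j; rewrite /F; case: ifP => [/andP [j_gt0 j_lt] | _].
  by apply: spanB; lia.
exact: in_span0.
Qed.

Lemma sum_slots d (f : bool -> nat -> R) (t : {ffun 'I_d -> 'I_(n + n)}) :
  \sum_(j < d) f (n <= t j)%N (ydeg (drop_idx t j)) =
  f false (ydeg t) *+ (d - ydeg t) + f true (ydeg t).-1 *+ ydeg t.
Proof.
transitivity (\sum_(j < d) if (n <= t j)%N then f true (ydeg t).-1 else f false (ydeg t)).
  by apply: eq_bigr => j _; rewrite -(ydeg_drop t j); case: (n <= t j)%N; rewrite ?addn0 ?addn1.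
by rewrite (sum_indicator [pred j | n <= t j]%N) ydegE.
Qed.

Lemma clone_sum_powers_form d (a b : R) (t : {ffun 'I_d -> 'I_(n + n)}) : (0 < d)%N ->
  clone n (sum_powers_form d a b) t =
  a * (ydeg t == 0%N)%:R + b * (ydeg t == d)%:R.
Proof.
move=> d_gt0; rewrite clone_binform /sum_powers_form.
case: eqP => [-> | K0]; first by rewrite bin0 divr1 eq_sym (gtn_eqF d_gt0) mulr1 mulr0 addr0.
case: eqP => [-> | Kd]; first by rewrite binn divr1 mulr0 mulr1 add0r.
by rewrite mul0r !mulr0 addr0.
Qed.

Lemma prod_lt_ydeg m (t : {ffun 'I_m -> 'I_(n + n)}) :
  \prod_(i < m) (t i < n)%N%:R = (ydeg t == 0%N)%:R :> R.
Proof. by rewrite prod_indicator ydeg_eq0. Qed.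

Lemma prod_ge_ydeg m (t : {ffun 'I_m -> 'I_(n + n)}) :
  \prod_(i < m) (n <= t i)%N%:R = (ydeg t == m)%:R :> R.
Proof. by rewrite prod_indicator ydeg_eq_max. Qed.

Lemma srank_le2_clone_sum_powers_form d (a b : R) : (0 < d)%N ->
  srank_le (clone n (sum_powers_form d a b)) 2.
Proof.
move=> d_gt0; exists (fun j => if j == ord0 then a else b).
exists (fun j x => if j == ord0 then (x < n)%N%:R else (n <= x)%N%:R).
apply: functional_extensionality => t.
by rewrite clone_sum_powers_form // big_ord_recl big_ord1 /= prod_lt_ydeg prod_ge_ydeg.
Qed.

Lemma restr_lshift_clone_sum_powers_form d (a b : R) : (0 < d)%N ->
  restr (lshift n) (clone n (sum_powers_form d a b))
  = fun _ => a.
Proof.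
move=> d_gt0; apply: functional_extensionality => t.
rewrite /restr clone_sum_powers_form // (_ : ydeg _ = 0%N).
  by rewrite eq_sym (gtn_eqF d_gt0) mulr1 mulr0 addr0.
by apply/eqP; rewrite ydeg_eq0; apply/forallP => i; rewrite ffunE /= ltn_ord.
Qed.

Lemma restr_rshift_clone_sum_powers_form d (a b : R) : (0 < d)%N ->
  restr (@rshift n n) (clone n (sum_powers_form d a b))
  = fun _ => b.
Proof.
move=> d_gt0; apply: functional_extensionality => t.
rewrite /restr clone_sum_powers_form // (_ : ydeg _ = d).
  by rewrite (gtn_eqF d_gt0) eqxx mulr1 mulr0 add0r.
by apply/eqP; rewrite ydeg_eq_max; apply/forallP => i; rewrite ffunE /= leq_addr.
Qed.

End YDegree.

Section SumPowersModW.
Variables (n e : nat) (W : seq (tensor R (n + n) e)) (a b : R).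
Let Cc : tensor R (n + n) e.+1 := clone n (sum_powers_form e.+1 a b).

Section RankOneWitness.
Hypothesis e_ge2 : (2 <= e)%N.
Hypothesis span_monomials : forall j, (1 <= j <= e - 1)%N ->
  in_span W (clone n (binform e (fun i => (i == j)%:R))).

Definition boundary_slot (y : bool) (k : nat) : R :=
  if y then a / e%:R * (k == e.-1)%:R else b / e%:R * (k == 1%N)%:R.

Lemma sum_boundary_slots (t : {ffun 'I_e.+1 -> 'I_(n + n)}) :
  \sum_(j < e.+1) boundary_slot (n <= t j)%N (ydeg (drop_idx t j)) =
  a * (ydeg t == e)%:R + b * (ydeg t == 1%N)%:R.
Proof.
have e_neq0 : e%:R != 0 :> R by rewrite pnatr_eq0 -lt0n (leq_trans _ e_ge2).
rewrite sum_slots /boundary_slot; move: (ydeg t) (ydeg_le t) => K K_le.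
have [-> | K_neq1] := eqVneq K 1%N.
  have [e_neq1 e_neq1'] : (1 == e)%N = false /\ (0 == e.-1)%N = false.
    by split; apply/negbTE/eqP; lia.
  rewrite e_neq1 e_neq1' subn1 succnK /= !mulr1 !mulr0 mul0rn addr0 add0r.
  by rewrite -(mulr_natr (b / e%:R)) divfK.
have [-> | K_neqe] := eqVneq K e.
  by rewrite eqxx /= mulr0 mul0rn add0r !mulr1 -(mulr_natr (a / e%:R)) divfK // mulr0 addr0.
have -> : (K.-1 == e.-1)%N = false.
  by apply/negbTE/eqP; move: K_neq1 K_neqe => /eqP ? /eqP ?; lia.
by rewrite /= !mulr0 !mul0rn addr0.
Qed.

Lemma boundary_slot_ends y : boundary_slot y 0 = 0 /\ boundary_slot y e = 0.
Proof.
by case: y; split; rewrite /boundary_slot; repeat (case: eqP => ? /=; try lia); rewrite mulr0.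
Qed.

Lemma rank_one_in_mod : exists T, in_mod Cc W T /\ rank_le T 1.
Proof.
pose u (y : bool) := if y then b else a.
pose Cv (K : nat) := a * (K == 0%N)%:R + b * (K == e.+1)%:R.
pose G y k := u y - Cv (k + y)%N - (a * ((k + y)%N == e)%:R + b * ((k + y)%N == 1%N)%:R).
have G_ends y : G y 0 = 0 /\ G y e = 0.
  by case: y; split; rewrite /G /Cv /u /= ?addn0 ?addn1; repeat (case: eqP => ? /=; try lia); lra.
exists (fun t : {ffun 'I_e.+1 -> 'I_(n + n)} => u (n <= t ord0)%N); split; last first.
  exists (fun _ i x => if i == ord0 then u (n <= x)%N else 1).
  apply: functional_extensionality => t.
  by rewrite big_ord1 big_ord_recl eqxx big1 ?mulr1.
exists (fun j x s => (j == ord0)%:R * G (n <= x)%N (ydeg s) + boundary_slot (n <= x)%N (ydeg s)).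
split.
  move=> j x; pose phi k := (j == ord0)%:R * G (n <= x)%N k + boundary_slot (n <= x)%N k.
  have [[G0 Ge] [B0 Be]] := (G_ends (n <= x)%N, boundary_slot_ends (n <= x)%N).
  by apply: (@in_span_ydeg _ _ _ phi span_monomials); rewrite /phi ?G0 ?B0 ?Ge ?Be mulr0 addr0.
apply: functional_extensionality => t.
rewrite /Cc clone_sum_powers_form // big_split /= sum_boundary_slots big_ord_recl eqxx mul1r.
rewrite big1 => [|i _]; last by rewrite mul0r.
by rewrite addr0 /G !(ydeg_drop t ord0) /Cv /=; ring.
Qed.

End RankOneWitness.

Section NoSymmetricRankOne.
Hypotheses (n_gt0 : (0 < n)%N) (even_d : ~~ odd e.+1) (ab_lt0 : a * b < 0).
Hypothesis onesE : forall T : tensor R n e.+1,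
  in_mod (ones n e.+1) (map (restr (lshift n)) W) T -> decomposable T -> T = ones n e.+1.
Hypothesis onesEE : forall T : tensor R n e.+1,
  in_mod (ones n e.+1) (map (restr (@rshift n n)) W) T -> decomposable T -> T = ones n e.+1.

Lemma scaled_power_notin_mod (T : tensor R (n + n) e.+1) (lam : R) (v : 'I_(n + n) -> R) :
  in_mod Cc W T -> (forall t, T t = lam * \prod_(i < e.+1) v (t i)) -> False.
Proof.
move=> inT defT.
have {defT}defT : T = fun t => lam * \prod_(i < e.+1) v (t i).
  exact: functional_extensionality.
have [a_neq0 b_neq0] : a != 0 /\ b != 0.
  by split; apply: contraTneq ab_lt0 => ->; rewrite ?mul0r ?mulr0 ltxx.
have x : 'I_n := Ordinal n_gt0.
have := in_mod_restr (lshift n) inT.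
rewrite defT restr_scaled_power restr_lshift_clone_sum_powers_form // => inE.
have := in_mod_restr (@rshift n n) inT.
rewrite defT restr_scaled_power restr_rshift_clone_sum_powers_form // => inEE.
have lam_p := scaled_power_in_mod_const (v := v \o lshift n) onesE a_neq0 inE x.
have lam_q := scaled_power_in_mod_const (v := v \o @rshift n n) onesEE b_neq0 inEE x.
have p_ge0 := exprn_even_ge0 ((v \o lshift n) x) even_d.
have q_ge0 := exprn_even_ge0 ((v \o @rshift n n) x) even_d.
move: ab_lt0; rewrite -lam_p -lam_q mulrACA -expr2; apply/negP; rewrite -leNgt.
by rewrite mulr_ge0 ?sqr_ge0 ?mulr_ge0.
Qed.

Lemma in_mod_neq0 (T : tensor R (n + n) e.+1) : in_mod Cc W T -> ~ (forall t, T t = 0).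
Proof.
move=> inT T0; apply: (scaled_power_notin_mod (v := fun=> 0) (lam := 0) inT) => t.
by rewrite T0 mul0r.
Qed.

Lemma rank_le_in_mod_gt0 (T : tensor R (n + n) e.+1) r :
  in_mod Cc W T -> rank_le T r -> (0 < r)%N.
Proof.
move=> inT [v defT]; case: r v defT => // v defT.
by case: (in_mod_neq0 inT) => t; rewrite defT big_ord0.
Qed.

Lemma srank_le_in_mod_gt1 (T : tensor R (n + n) e.+1) r :
  in_mod Cc W T -> srank_le T r -> (1 < r)%N.
Proof.
move=> inT [lam [v defT]]; case: r lam v defT => [|[|r]] // lam v defT.
  by case: (in_mod_neq0 inT) => t; rewrite defT big_ord0.
by case: (scaled_power_notin_mod inT (lam := lam ord0) (v := v ord0)) => t; rewrite defT big_ord1.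
Qed.

End NoSymmetricRankOne.

End SumPowersModW.

End CloneTensors.

Theorem proposition4p5 (R : realType) (d n : nat)
    (W : seq (tensor R (n + n) d.-1)) :
  (4 <= d)%N -> ~~ odd d -> (0 < n)%N ->
  (forall j : nat, (1 <= j <= d - 2)%N ->
     in_span W (clone n (binform d.-1 (fun i => (i == j)%:R)))) ->
  (forall T : tensor R n d, in_mod (ones n d) (map (@restrE R n d.-1) W) T ->
     decomposable T -> T = ones n d) ->
  (forall T : tensor R n d, in_mod (ones n d) (map (@restrEE R n d.-1) W) T ->
     decomposable T -> T = ones n d) ->
  let C := binform d (fun i => if i == 0%N then 1 else if i == d then -3 else 0) in
  exists r s : nat,
    is_minrk (in_mod (clone n C) W) r /\
    is_minsrk (in_mod (clone n C) W) s /\ (r < s)%N.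
Proof.
case: d W => [|e] W // d_ge4 even_d n_gt0 span_monomials onesE onesEE C.
have e_ge2 : (2 <= e)%N by lia.
have ab_lt0 : 1 * -3 < 0 :> R by rewrite mul1r oppr_lt0.
exists 1%N, 2%N; split; [split | split; [split | by []]].
- exact: rank_one_in_mod.
- by move=> T r; apply: rank_le_in_mod_gt0.
- have srank2 : srank_le (clone n C) 2 by exact: srank_le2_clone_sum_powers_form.
  exists (clone n C); split; first exact: in_mod_self.
  by split; first exact: srank_le_symmetric srank2.
- by move=> T r inT _; apply: srank_le_in_mod_gt1 inT.
Qed.
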